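(* Let $m\ge n$, $B\in\mathbb R^{n\times m}$ of full row rank, $f:\mathbb R^m\to\mathbb R$ and $h:\mathbb R^n\to\mathbb R$ convex and continuously differentiable with Lipschitz gradients, $\mathcal L(u,p)=f(u)-h(p)+(Bu,p)$, and $(u^*,p^* )$ a saddle point of $\mathcal L$. Let $T_{\mathcal U},\mathcal I_{\mathcal V}$ ($m\times m$) and $T_{\mathcal P},\mathcal I_{\mathcal Q}$ ($n\times n$) be symmetric positive definite. Suppose $h\in\mathcal S^{1,1}_{\mu_{h,T_{\mathcal P}},L_{h,T_{\mathcal P}}}$ w.r.t. $T_{\mathcal P}$ with $L_{h,T_{\mathcal P}}\le1$, $f\in\mathcal S^{1,1}_{\mu_{f,T_{\mathcal U}},L_{f,T_{\mathcal U}}}$ w.r.t. $T_{\mathcal U}$ with $L_{f,T_{\mathcal U}}\le1$, and $f_B$ is strongly convex w.r.t. $\mathcal I_{\mathcal V}$ with constant $\mu_{f_B,\mathcal I_{\mathcal V}}>0$. Define the symmetric TPD field $\mathcal G=(\mathcal G^u,\mathcal G^p)$, $$\mathcal G^u(u,p)=-\mathcal I_{\mathcal V}^{-1}\big(\partial_u\mathcal L(u,p)+B^\top T_{\mathcal P}^{-1}\partial_p\mathcal L(u,p)\big),\qquad \mathcal G^p(u,p)=\mathcal I_{\mathcal Q}^{-1}\big(\partial_p\mathcal L(u,p)-BT_{\mathcal U}^{-1}\partial_u\mathcal L(u,p)\big),$$ and $\mathcal E(u,p)=\frac12\|u-u^*\|^2_{\mathcal I_{\mathcal V}}+\frac12\|p-p^*\|^2_{\mathcal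 I_{\mathcal Q}}$. Then for all $(u,p)$, $$-\nabla\mathcal E(u,p)\cdot\mathcal G(u,p)\ge\mu\,\mathcal E(u,p)+\frac{\mu_{f,T_{\mathcal U}}}{2}\|v-v^*\|^2_{T_{\mathcal U}}+\frac{\mu_{h,T_{\mathcal P}}}{2}\|q-q^*\|^2_{T_{\mathcal P}},$$ where $0<\mu=\min\{\mu_{f_B,\mathcal I_{\mathcal V}},\mu_{h_B,\mathcal I_{\mathcal Q}}\}$. Consequently, if $(u(t),p(t))$ solves $u'=\mathcal G^u(u,p)$, $p'=\mathcal G^p(u,p)$, then $\mathcal E(u(t),p(t))\le e^{-\mu t}\mathcal E(u(0),p(0))$ for all $t>0$.
   Context: $\partial_u\mathcal L(u,p)=\nabla f(u)+B^\top p$, $\partial_p\mathcal L(u,p)=Bu-\nabla h(p)$; a saddle point satisfies $\partial_u\mathcal L(u^*,p^* )=0$, $\partial_p\mathcal L(u^*,p^* )=0$. For SPD $M$, $\|x\|_M=(Mx,x)^{1/2}$; $D_g(y,x)=g(y)-g(x)-(\nabla g(x),y-x)$; $g\in\mathcal S^{1,1}_{\mu_{g,M},L_{g,M}}$ w.r.t. $M$ means $\frac{\mu_{g,M}}2\|x-y\|_M^2\le D_g(y,x)\le\frac{L_{g,M}}2\|x-y\|_M^2$ for all $x,y$ ($\mu_{g,M}\ge0$); strong convexity with constant $\mu_{g,M}$ means the lower bound holds. Define $f_B(u)=f(u)+\frac12(B^\top T_{\mathcal P}^{-1}Bu,u)$, $h_B(p)=h(p)+\frac12(BT_{\mathcal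 U}^{-1}B^\top p,p)$ with strong convexity constant $\mu_{h_B,\mathcal I_{\mathcal Q}}$ w.r.t. $\mathcal I_{\mathcal Q}$; $v=u+T_{\mathcal U}^{-1}B^\top p$, $q=p-T_{\mathcal P}^{-1}Bu$, and $v^*,q^*$ the same expressions at $(u^*,p^* )$. $\nabla\mathcal E\cdot\mathcal G$ means $(\mathcal I_{\mathcal V}(u-u^* ),\mathcal G^u)+(\mathcal I_{\mathcal Q}(p-p^* ),\mathcal G^p)$. *)

From HB Require Import structures.
From mathcomp Require Import all_boot all_order all_algebra.
From mathcomp Require Import all_classical all_reals all_analysis.
Set Implicit Arguments. Unset Strict Implicit. Unset Printing Implicit Defensive.
Import Order.TTheory GRing.Theory Num.Theory.
Import numFieldNormedType.Exports.
Local Open Scope ring_scope.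

Section Defs.
Variable R : realType.

Definition dot k (x y : 'cV[R]_k) : R := \sum_(i < k) x i 0 * y i 0.

Definition sqnorm k (M : 'M[R]_k) (x : 'cV[R]_k) : R := dot (M *m x) x.

Definition spd k (M : 'M[R]_k) : Prop :=
  M^T = M /\ forall x : 'cV[R]_k, x != 0 -> 0 < sqnorm M x.

Definition bregman k (g : 'cV[R]_k -> R) (gg : 'cV[R]_k -> 'cV[R]_k)
  (y x : 'cV[R]_k) : R := g y - g x - dot (gg x) (y - x).

Definition S11 k (g : 'cV[R]_k -> R) (gg : 'cV[R]_k -> 'cV[R]_k)
  (M : 'M[R]_k) (mu L : R) : Prop :=
  0 <= mu /\ forall x y : 'cV[R]_k,
    mu / 2 * sqnorm M (x - y) <= bregman g gg y x <= L / 2 * sqnorm M (x - y).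

Definition strongly_convex k (g : 'cV[R]_k -> R) (gg : 'cV[R]_k -> 'cV[R]_k)
  (M : 'M[R]_k) (mu : R) : Prop :=
  forall x y : 'cV[R]_k, mu / 2 * sqnorm M (x - y) <= bregman g gg y x.

Definition C1_grad k (g : 'cV[R]_k -> R) (gg : 'cV[R]_k -> 'cV[R]_k) : Prop :=
  (forall x, differentiable g x /\ forall v, 'd g x v = dot (gg x) v)
  /\ continuous gg.

Definition lipschitz_grad k (gg : 'cV[R]_k -> 'cV[R]_k) : Prop :=
  exists K : R, forall x y, `|gg x - gg y| <= K * `|x - y|.

Variables (m n : nat) (B : 'M[R]_(n, m)) (TU : 'M[R]_m) (TP : 'M[R]_n).
Variables (f : 'cV[R]_m -> R) (gf : 'cV[R]_m -> 'cV[R]_m).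
Variables (h : 'cV[R]_n -> R) (gh : 'cV[R]_n -> 'cV[R]_n).

Definition fB (u : 'cV[R]_m) : R := f u + 2^-1 * dot (B^T *m invmx TP *m B *m u) u.
Definition gfB (u : 'cV[R]_m) : 'cV[R]_m := gf u + B^T *m invmx TP *m B *m u.
Definition hB (p : 'cV[R]_n) : R := h p + 2^-1 * dot (B *m invmx TU *m B^T *m p) p.
Definition ghB (p : 'cV[R]_n) : 'cV[R]_n := gh p + B *m invmx TU *m B^T *m p.

(* partial derivatives of L(u,p) = f u - h p + (B u, p) *)
Definition dLu (u : 'cV[R]_m) (p : 'cV[R]_n) : 'cV[R]_m := gf u + B^T *m p.
Definition dLp (u : 'cV[R]_m) (p : 'cV[R]_n) : 'cV[R]_n := B *m u - gh p.

Variables (IV : 'M[R]_m) (IQ : 'M[R]_n).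

Definition Gu (u : 'cV[R]_m) (p : 'cV[R]_n) : 'cV[R]_m :=
  - (invmx IV *m (dLu u p + B^T *m invmx TP *m dLp u p)).
Definition Gp (u : 'cV[R]_m) (p : 'cV[R]_n) : 'cV[R]_n :=
  invmx IQ *m (dLp u p - B *m invmx TU *m dLu u p).

Variables (us : 'cV[R]_m) (ps : 'cV[R]_n).

Definition Ly (u : 'cV[R]_m) (p : 'cV[R]_n) : R :=
  2^-1 * sqnorm IV (u - us) + 2^-1 * sqnorm IQ (p - ps).

Definition gradE_dot_G (u : 'cV[R]_m) (p : 'cV[R]_n) : R :=
  dot (IV *m (u - us)) (Gu u p) + dot (IQ *m (p - ps)) (Gp u p).

Definition vvar (u : 'cV[R]_m) (p : 'cV[R]_n) : 'cV[R]_m := u + invmx TU *m B^T *m p.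
Definition qvar (u : 'cV[R]_m) (p : 'cV[R]_n) : 'cV[R]_n := p - invmx TP *m B *m u.

End Defs.

(* With e = u - us, d = p - ps, a = T_U^-1 B^T d and b = T_P^-1 B e, the saddle
   conditions give
     -grad E . G = (∇f(u) - ∇f(us), e + a) + (∇h(p) - ∇h(ps), d - b)
                   + ||a||^2_{T_U} + ||b||^2_{T_P}.
   Half of the right-hand side is bounded below by the strong monotonicity of
   ∇f_B and ∇h_B, which gives mu E; the other half by the S^{1,1} bounds with
   L <= 1 taken along the shifts a and -b, which gives the ||v - v*|| and
   ||q - q*|| terms.  h_B is strongly convex because B T_U^-1 B^T is positive
   definite when B has full row rank, and the decay of E along trajectories is
   Grönwall's argument for e^(mu t) E. *)
From HB Require Import structures.
From mathcomp Require Import all_boot all_order all_algebra.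
From mathcomp Require Import all_classical all_reals all_analysis.
From mathcomp Require Import ring lra.
Import Order.TTheory GRing.Theory Num.Theory.
Import numFieldNormedType.Exports.
Local Open Scope ring_scope.
Local Open Scope classical_set_scope.
Set Implicit Arguments. Unset Strict Implicit. Unset Printing Implicit Defensive.

Section InnerProduct.
Variable R : realType.
Implicit Types k l : nat.

Lemma dotE k (x y : 'cV[R]_k) : dot x y = (x^T *m y) 0 0.
Proof. by rewrite /dot !mxE; apply: eq_bigr => i _; rewrite !mxE. Qed.

Lemma dotC k (x y : 'cV[R]_k) : dot x y = dot y x.
Proof. by rewrite /dot; apply: eq_bigr => i _; rewrite mulrC. Qed.

Lemma dotDl k (x y z : 'cV[R]_k) : dot (x + y) z = dot x z + dot y z.
Proof. by rewrite /dot -big_split; apply: eq_bigr => i _; rewrite mxE mulrDl. Qed.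

Lemma dotDr k (x y z : 'cV[R]_k) : dot z (x + y) = dot z x + dot z y.
Proof. by rewrite dotC dotDl !(dotC z). Qed.

Lemma dotNl k (x y : 'cV[R]_k) : dot (- x) y = - dot x y.
Proof. by rewrite /dot -sumrN; apply: eq_bigr => i _; rewrite mxE mulNr. Qed.

Lemma dotNr k (x y : 'cV[R]_k) : dot y (- x) = - dot y x.
Proof. by rewrite dotC dotNl dotC. Qed.

Lemma dotBl k (x y z : 'cV[R]_k) : dot (x - y) z = dot x z - dot y z.
Proof. by rewrite dotDl dotNl. Qed.

Lemma dotBr k (x y z : 'cV[R]_k) : dot z (x - y) = dot z x - dot z y.
Proof. by rewrite dotDr dotNr. Qed.

Lemma dotZl k a (x y : 'cV[R]_k) : dot (a *: x) y = a * dot x y.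
Proof. by rewrite /dot mulr_sumr; apply: eq_bigr => i _; rewrite mxE mulrA. Qed.

Lemma dotZr k a (x y : 'cV[R]_k) : dot y (a *: x) = a * dot y x.
Proof. by rewrite dotC dotZl dotC. Qed.

Lemma dot0l k (x : 'cV[R]_k) : dot 0 x = 0.
Proof. by rewrite /dot big1 // => i _; rewrite mxE mul0r. Qed.

Lemma dot0r k (x : 'cV[R]_k) : dot x 0 = 0.
Proof. by rewrite dotC dot0l. Qed.

Lemma dot_mulmxl k l (A : 'M[R]_(k, l)) x y : dot (A *m x) y = dot x (A^T *m y).
Proof. by rewrite !dotE trmx_mul mulmxA. Qed.

Lemma dot_ge0 k (x : 'cV[R]_k) : 0 <= dot x x.
Proof. by apply: sumr_ge0 => i _; rewrite -expr2 sqr_ge0. Qed.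

Lemma sqr_coord_le_dot k (x : 'cV[R]_k) i : x i 0 ^+ 2 <= dot x x.
Proof.
rewrite /dot (bigD1 i) //= -expr2 lerDl.
by apply: sumr_ge0 => j _; rewrite -expr2 sqr_ge0.
Qed.

Definition abs_sum_mx k (M : 'M[R]_k) : R := \sum_i \sum_j `|M i j|.

Lemma abs_sum_mx_ge0 k (M : 'M[R]_k) : 0 <= abs_sum_mx M.
Proof. by apply: sumr_ge0 => i _; apply: sumr_ge0. Qed.

Lemma sqnorm_le_abs_sum k (M : 'M[R]_k) x : sqnorm M x <= abs_sum_mx M * dot x x.
Proof.
rewrite /sqnorm /dot /abs_sum_mx mulr_suml; apply: ler_sum => i _.
rewrite mxE !mulr_suml; apply: ler_sum => j _.
have xij : `|x j 0 * x i 0| <= dot x x.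
  have := sqr_coord_le_dot x i; have := sqr_coord_le_dot x j.
  rewrite ler_norml /dot; set S := \sum_(_ < _) _ => ? ?; apply/andP; split; nra.
by rewrite -mulrA (le_trans (ler_norm _)) // normrM ler_wpM2l.
Qed.

Lemma sqnorm0 k (M : 'M[R]_k) : sqnorm M 0 = 0.
Proof. by rewrite /sqnorm mulmx0 dot0l. Qed.

Lemma sqnormN k (M : 'M[R]_k) x : sqnorm M (- x) = sqnorm M x.
Proof. by rewrite /sqnorm mulmxN dotNl dotNr opprK. Qed.

End InnerProduct.

Section PositiveDefinite.
Variables (R : realType) (k : nat) (K : 'M[R]_k).
Hypothesis spdK : spd K.

Lemma spd_sqnorm_ge0 (x : 'cV[R]_k) : 0 <= sqnorm K x.
Proof.
have [->|x0] := eqVneq x 0; first by rewrite sqnorm0.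
exact/ltW/(proj2 spdK).
Qed.

Lemma dot_mulmx_spd (x y : 'cV[R]_k) : dot (K *m x) y = dot x (K *m y).
Proof. by rewrite dot_mulmxl (proj1 spdK). Qed.

Lemma spd_unitmx : K \in unitmx.
Proof.
rewrite unitmxE unitfE; apply/negP => /det0P [v v0 vK].
have vT0 : v^T != 0 by rewrite -trmx0 (inj_eq (@trmx_inj _ _ _)).
have := proj2 spdK _ vT0.
by rewrite /sqnorm -(proj1 spdK) -trmx_mul vK trmx0 dot0l ltxx.
Qed.

Lemma spd_invmx_tr : (invmx K)^T = invmx K.
Proof. by rewrite trmx_inv (proj1 spdK). Qed.

Lemma sqnorm_invmx (x : 'cV[R]_k) : sqnorm K (invmx K *m x) = dot x (invmx K *m x).
Proof. by rewrite /sqnorm (mulKVmx spd_unitmx). Qed.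

Lemma spd_cauchy_schwarz (x y : 'cV[R]_k) :
  dot (K *m x) y ^+ 2 <= sqnorm K x * sqnorm K y.
Proof.
have [->|y0] := eqVneq y 0; first by rewrite dot0r sqnorm0 expr0n mulr0.
have Ky : 0 < sqnorm K y := proj2 spdK _ y0.
set c := dot (K *m x) y.
(* expand the nonnegative quadratic ||x - t y||_K^2 at t = c / ||y||_K^2 *)
have := spd_sqnorm_ge0 (x - (c / sqnorm K y) *: y).
rewrite /sqnorm mulmxBr !dotBl !dotBr -scalemxAr !dotZl !dotZr.
rewrite -[dot (K *m y) x]dotC -dot_mulmx_spd -/c -/(sqnorm K x) -/(sqnorm K y).
rewrite mulfVK ?gt_eqF // => q0.
have : c / sqnorm K y * c <= sqnorm K x by lra.
by rewrite mulrAC ler_pdivrMr // expr2.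
Qed.

Lemma spd_dot_le : exists2 C, 0 <= C & forall x, dot x x <= C * sqnorm K x.
Proof.
exists (abs_sum_mx (invmx K)) => [|x]; first exact: abs_sum_mx_ge0.
have CS := spd_cauchy_schwarz (invmx K *m x) x.
rewrite (mulKVmx spd_unitmx) sqnorm_invmx in CS.
have := sqnorm_le_abs_sum (invmx K) x; rewrite /sqnorm dotC => Kx.
have [->|x0] := eqVneq (dot x x) 0.
  by rewrite mulr_ge0 ?abs_sum_mx_ge0 ?spd_sqnorm_ge0.
have xx0 : 0 < dot x x by rewrite lt0r x0 dot_ge0.
rewrite -(ler_pM2l xx0) -expr2 (le_trans CS) // mulrCA mulrA.
by rewrite ler_wpM2r ?spd_sqnorm_ge0.
Qed.

Lemma spd_sqnorm_dominates (M : 'M[R]_k) :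
  exists2 c, 0 < c & forall x, c * sqnorm M x <= sqnorm K x.
Proof.
have [C C0 HC] := spd_dot_le; set S := abs_sum_mx M.
have SC0 : 0 <= S * C by rewrite mulr_ge0 ?abs_sum_mx_ge0.
exists (1 + S * C)^-1 => [|x]; first by rewrite invr_gt0; lra.
rewrite ler_pdivrMl; last lra.
have := sqnorm_le_abs_sum M x; have := HC x; have := spd_sqnorm_ge0 x.
rewrite -/S => Kx0 xx Mx.
have : S * dot x x <= S * (C * sqnorm K x) by rewrite ler_wpM2l ?abs_sum_mx_ge0.
nra.
Qed.

End PositiveDefinite.

Section Convexity.
Variables (R : realType) (k : nat) (M : 'M[R]_k).
Variables (g : 'cV[R]_k -> R) (gg : 'cV[R]_k -> 'cV[R]_k).

Lemma strongly_convex_monotone c x y : strongly_convex g gg M c ->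
  c * sqnorm M (x - y) <= dot (gg x - gg y) (x - y).
Proof.
move=> sc; have := sc x y; have := sc y x.
rewrite -opprB sqnormN /bregman -[y - x]opprB dotNr dotBl; lra.
Qed.

Lemma S11_bregman_ge0 mu L x y : spd M -> S11 g gg M mu L -> 0 <= bregman g gg y x.
Proof.
move=> sM [mu0 /(_ x y) /andP[+ _]]; apply: le_trans.
by rewrite mulr_ge0 ?divr_ge0 ?spd_sqnorm_ge0.
Qed.

(* Subtract the upper bounds on D_g(x + a, x) and D_g(y - a, y) from the lower
   bounds on D_g(x + a, y) and D_g(y - a, x): all values of g cancel. *)
Lemma S11_monotone_shift mu L x y a : spd M -> S11 g gg M mu L -> L <= 1 ->
  mu * sqnorm M (x - y + a) <=
  dot (gg x - gg y) (x - y) + 2 * dot (gg x - gg y) a + sqnorm M a.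
Proof.
move=> sM [_ H] L1.
have lo z w : mu / 2 * sqnorm M (z - w) <= bregman g gg z w.
  by have /andP[+ _] := H w z; rewrite -opprB sqnormN.
have up z w : bregman g gg z w <= 2^-1 * sqnorm M (z - w).
  have /andP[_ /le_trans->] // := H w z; rewrite -opprB sqnormN.
  by rewrite ler_wpM2r ?spd_sqnorm_ge0 //; lra.
have := lo (x + a) y; have := up (x + a) x; have := lo (y - a) x; have := up (y - a) y.
have -> : x + a - y = x - y + a by rewrite addrAC.
have -> : x + a - x = a by rewrite addrAC subrr add0r.
have -> : y - a - x = - (x - y + a) by rewrite opprD opprB addrAC.
have -> : y - a - y = - a by rewrite addrAC subrr add0r.
rewrite /bregman !sqnormN !(dotDr, dotNr, dotBl); lra.
Qed.

Lemma bregman_add_quadratic (K : 'M[R]_k) x y : K^T = K ->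
  bregman (fun z => g z + 2^-1 * dot (K *m z) z) (fun z => gg z + K *m z) y x =
  bregman g gg y x + 2^-1 * sqnorm K (y - x).
Proof.
move=> KT; rewrite /bregman /sqnorm mulmxBr !dotBl !dotBr !dotDl.
rewrite [dot (K *m y) x]dot_mulmxl KT [dot y _]dotC; lra.
Qed.

End Convexity.

Section SchurComplement.
Variables (R : realType) (m n : nat) (T : 'M[R]_m).
Hypothesis spdT : spd T.

Lemma sqnorm_invmx_mul k (A : 'M[R]_(m, k)) z :
  sqnorm T (invmx T *m A *m z) = dot (A^T *m invmx T *m A *m z) z.
Proof.
by rewrite /sqnorm -!mulmxA (mulKVmx (spd_unitmx spdT)) [RHS]dot_mulmxl trmxK dotC.
Qed.

Lemma spd_mul_invmx_tr (B : 'M[R]_(n, m)) : row_free B -> spd (B *m invmx T *m B^T).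
Proof.
move=> rfB; split; first by rewrite !trmx_mul trmxK spd_invmx_tr // mulmxA.
move=> z z0.
have -> : sqnorm (B *m invmx T *m B^T) z = sqnorm T (invmx T *m B^T *m z).
  by rewrite sqnorm_invmx_mul trmxK.
apply: (proj2 spdT); apply: contra z0 => /eqP TBz0.
have BTz0 : B^T *m z = 0.
  by rewrite -(mulKVmx (spd_unitmx spdT) (B^T *m z)) [invmx T *m _]mulmxA TBz0 mulmx0.
have : z^T *m B = 0 *m B by rewrite mul0mx -[B]trmxK -trmx_mul BTz0 trmx0.
by move/(row_free_inj rfB)/(congr1 trmx); rewrite trmxK trmx0 => ->.
Qed.

End SchurComplement.

Lemma hB_strongly_convex (R : realType) (m n : nat) (B : 'M[R]_(n, m))
  (h : 'cV[R]_n -> R) (gh : 'cV[R]_n -> 'cV[R]_n) (TU : 'M[R]_m) (IQ : 'M[R]_n) :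
  \rank B = n -> spd TU -> (forall x y, 0 <= bregman h gh y x) ->
  exists c, 0 < c /\ strongly_convex (hB B TU h) (ghB B TU gh) IQ c.
Proof.
move=> rB sTU hcvx; set K := B *m invmx TU *m B^T.
have sK : spd K by apply: spd_mul_invmx_tr; rewrite // /row_free rB.
have [c c0 Kc] := spd_sqnorm_dominates sK IQ.
exists c; split => // x y.
rewrite bregman_add_quadratic ?(proj1 sK) // -/K -[x - y]opprB sqnormN.
have := hcvx x y; have := Kc (y - x); lra.
Qed.

Section SaddleDissipation.
Variables (R : realType) (m n : nat) (B : 'M[R]_(n, m)).
Variables (f : 'cV[R]_m -> R) (gf : 'cV[R]_m -> 'cV[R]_m).
Variables (h : 'cV[R]_n -> R) (gh : 'cV[R]_n -> 'cV[R]_n).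
Variables (TU IV : 'M[R]_m) (TP IQ : 'M[R]_n) (us : 'cV[R]_m) (ps : 'cV[R]_n).
Hypotheses (sTU : spd TU) (sIV : spd IV) (sTP : spd TP) (sIQ : spd IQ).
Hypotheses (saddle_u : dLu B gf us ps = 0) (saddle_p : dLp B gh us ps = 0).

Lemma dLu_saddle u p : dLu B gf u p = gf u - gf us + B^T *m (p - ps).
Proof.
have gfs : gf us = - (B^T *m ps) by apply/eqP; rewrite -addr_eq0; exact/eqP/saddle_u.
by rewrite /dLu mulmxBr gfs opprK addrACA subrr addr0.
Qed.

Lemma dLp_saddle u p : dLp B gh u p = B *m (u - us) - (gh p - gh ps).
Proof.
have ghs : gh ps = B *m us by apply/eqP; rewrite eq_sym -subr_eq0; exact/eqP/saddle_p.
by rewrite /dLp mulmxBr ghs opprB addrA subrK.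
Qed.

Lemma vvarB u p :
  vvar B TU u p - vvar B TU us ps = u - us + invmx TU *m B^T *m (p - ps).
Proof. by rewrite /vvar opprD addrACA mulmxBr. Qed.

Lemma qvarB u p :
  qvar B TP u p - qvar B TP us ps = p - ps - invmx TP *m B *m (u - us).
Proof. by rewrite /qvar opprD addrACA mulmxBr; congr (_ + _); rewrite opprD. Qed.

Lemma neg_gradE_dot_G u p :
  let e := u - us in let d := p - ps in
  let a := invmx TU *m B^T *m d in let b := invmx TP *m B *m e in
  - gradE_dot_G B TU TP gf gh IV IQ us ps u p =
  dot (gf u - gf us) e + dot (gh p - gh ps) d
  + dot (gf u - gf us) a - dot (gh p - gh ps) b + sqnorm TU a + sqnorm TP b.
Proof.
move=> e d a b; rewrite {}/a {}/b /gradE_dot_G /Gu /Gp dLu_saddle dLp_saddle -/e -/d.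
set Df := gf u - gf us; set Dh := gh p - gh ps; clearbody e d Df Dh.
rewrite dotNr !dot_mulmx_spd // !mulKVmx ?spd_unitmx // !sqnorm_invmx_mul // trmxK.
rewrite !(mulmxDr, mulmxBr, mulmxN, mulmxA, dotDr, dotBr, dotNr).
have eBd : dot e (B^T *m d) = dot d (B *m e) by rewrite -dot_mulmxl dotC.
have dDf : dot Df (invmx TU *m B^T *m d) = dot d (B *m invmx TU *m Df).
  by rewrite dotC dot_mulmxl !trmx_mul trmxK spd_invmx_tr // mulmxA.
have eDh : dot Dh (invmx TP *m B *m e) = dot e (B^T *m invmx TP *m Dh).
  by rewrite dotC dot_mulmxl !trmx_mul spd_invmx_tr // mulmxA.
rewrite eBd dDf eDh (dotC Df) (dotC Dh) (dotC _ e) (dotC _ d); lra.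
Qed.

Lemma fB_monotone mu u : strongly_convex (fB B TP f) (gfB B TP gf) IV mu ->
  mu * sqnorm IV (u - us) <=
  dot (gf u - gf us) (u - us) + sqnorm TP (invmx TP *m B *m (u - us)).
Proof.
move=> sc; have := strongly_convex_monotone u us sc.
by rewrite /gfB opprD addrACA -mulmxBr sqnorm_invmx_mul // -dotDl.
Qed.

Lemma hB_monotone mu p : strongly_convex (hB B TU h) (ghB B TU gh) IQ mu ->
  mu * sqnorm IQ (p - ps) <=
  dot (gh p - gh ps) (p - ps) + sqnorm TU (invmx TU *m B^T *m (p - ps)).
Proof.
move=> sc; have := strongly_convex_monotone p ps sc.
by rewrite /ghB opprD addrACA -mulmxBr sqnorm_invmx_mul // trmxK -dotDl.
Qed.

Lemma lyapunov_dissipation mu_f L_f mu_h L_h mu_fB mu_hB mu u p :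
  S11 f gf TU mu_f L_f -> L_f <= 1 -> S11 h gh TP mu_h L_h -> L_h <= 1 ->
  strongly_convex (fB B TP f) (gfB B TP gf) IV mu_fB ->
  strongly_convex (hB B TU h) (ghB B TU gh) IQ mu_hB ->
  mu <= mu_fB -> mu <= mu_hB ->
  mu * Ly IV IQ us ps u p
    + mu_f / 2 * sqnorm TU (vvar B TU u p - vvar B TU us ps)
    + mu_h / 2 * sqnorm TP (qvar B TP u p - qvar B TP us ps)
  <= - gradE_dot_G B TU TP gf gh IV IQ us ps u p.
Proof.
move=> Sf Lf Sh Lh scf sch mf mh.
rewrite vvarB qvarB neg_gradE_dot_G /Ly.
have := S11_monotone_shift u us (invmx TU *m B^T *m (p - ps)) sTU Sf Lf.
have := S11_monotone_shift p ps (- (invmx TP *m B *m (u - us))) sTP Sh Lh.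
have := fB_monotone u scf; have := hB_monotone p sch.
have := ler_wpM2r (spd_sqnorm_ge0 sIV (u - us)) mf.
have := ler_wpM2r (spd_sqnorm_ge0 sIQ (p - ps)) mh.
rewrite sqnormN !dotNr; lra.
Qed.

End SaddleDissipation.

Section Trajectories.
Variable R : realType.

Lemma is_derive_coord k (x : R -> 'cV[R]_k) (t : R) (dx : 'cV[R]_k) i :
  is_derive t 1 x dx -> is_derive t 1 (fun s => x s i 0) (dx i 0).
Proof.
move=> [dv dval].
have cv : (fun h : R => h^-1 *: ((x \o shift t) (h *: 1) - x t)) @ 0^' --> dx.
  by rewrite -dval; exact: dv.
have cvi := continuous_cvg _ (@coord_continuous R k 1 i 0 dx) cv.
have e : (fun h : R => h^-1 *: (((fun s => x s i 0) \o shift t) (h *: 1) - x t i 0)) =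
    (fun M : 'cV[R]_k => M i 0) \o (fun h : R => h^-1 *: ((x \o shift t) (h *: 1) - x t)).
  by apply/funext => h /=; rewrite !mxE.
have cvi' : (fun h : R => h^-1 *: (((fun s => x s i 0) \o shift t) (h *: 1) - x t i 0))
    @ 0^' --> dx i 0 by rewrite e; exact: cvi.
by split; [exact: (cvgP _ cvi') | exact: cvg_lim].
Qed.

Lemma sqnorm_sum k (M : 'M[R]_k) y : sqnorm M y = \sum_i \sum_j M i j * (y j 0 * y i 0).
Proof.
rewrite /sqnorm /dot; apply: eq_bigr => i _; rewrite mxE mulr_suml.
by apply: eq_bigr => j _; rewrite mulrA.
Qed.

Lemma is_derive_sqnorm k (M : 'M[R]_k) (y : R -> 'cV[R]_k) (t : R) (dy : 'cV[R]_k) :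
  M^T = M -> is_derive t 1 y dy ->
  is_derive t 1 (fun s => sqnorm M (y s)) (2 * dot (M *m y t) dy).
Proof.
move=> MT D; have Dy j := is_derive_coord j D.
have Dij i j : is_derive t 1 (fun s => M i j * (y s j 0 * y s i 0))
    (M i j * (y t j 0 * dy i 0 + y t i 0 * dy j 0)).
  exact: is_deriveZ _ (is_deriveM (Dy j) (Dy i)).
have Di i : is_derive t 1 (fun s => \sum_j M i j * (y s j 0 * y s i 0))
    (\sum_j M i j * (y t j 0 * dy i 0 + y t i 0 * dy j 0)).
  by have := is_derive_sum (Dij i); rewrite fct_sumE.
have := is_derive_sum Di; rewrite fct_sumE (funext (fun s => sqnorm_sum M (y s))).
move/is_derive_eq; apply.
have -> : 2 * dot (M *m y t) dy = dot (M *m dy) (y t) + dot (M *m y t) dy.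
  by rewrite [dot (M *m dy) _]dot_mulmxl MT [dot dy _]dotC; lra.
rewrite /dot -big_split /=; apply: eq_bigr => i _.
rewrite !mxE !mulr_suml -big_split /=; apply: eq_bigr => j _.
by ring.
Qed.

Lemma cvg_sqnorm k (M : 'M[R]_k) T (F : set_system T) (FF : Filter F)
    (y : T -> 'cV[R]_k) (y0 : 'cV[R]_k) :
  y s @[s --> F] --> y0 -> sqnorm M (y s) @[s --> F] --> sqnorm M y0.
Proof.
move=> cy; have cyi i : y s i 0 @[s --> F] --> y0 i 0.
  exact: continuous_cvg _ (@coord_continuous R k 1 i 0 y0) cy.
rewrite sqnorm_sum (funext (fun s => sqnorm_sum M (y s))).
apply: cvg_big => // [|i _]; first exact: add_continuous.
apply: cvg_big => // [|j _]; first exact: add_continuous.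
by apply: cvgM; [exact: cvg_cst | exact: cvgM].
Qed.

(* Grönwall: s |-> e^(mu s) E(s) has nonpositive derivative on ]0, t[. *)
Lemma exp_decay (mu : R) (E dE : R -> R) :
  (forall t : R, 0 < t -> is_derive t 1 E (dE t)) ->
  (forall t : R, 0 < t -> dE t <= - mu * E t) ->
  E x @[x --> 0^'+] --> E 0 ->
  forall t : R, 0 < t -> E t <= expR (- mu * t) * E 0.
Proof.
move=> DE dE_le E0 t t0.
pose phi s := expR (mu * s) * E s.
have Dexp (s : R) : is_derive s 1 (fun x => expR (mu * x)) (expR (mu * s) * mu).
  apply: (@is_derive1_comp _ expR (fun x => mu * x)).
  by have := is_deriveZ mu (is_derive_id s (1 : R)); rewrite -[mu *: 1]/(mu * 1) mulr1.
have Dphi (s : R) : 0 < s -> is_derive s 1 phi (expR (mu * s) * (dE s + mu * E s)).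
  move=> s0; apply: is_derive_eq; first exact: is_deriveM (Dexp s) (DE s s0).
  by rewrite /GRing.scale /=; ring.
have cphi (s : R) : 0 < s -> {for s, continuous phi}.
  by move/Dphi=> [/derivable1_diffP /differentiable_continuous].
have : phi t <= phi 0.
  apply: (@ler0_derive1_le_cc _ phi 0 t).
  - by move=> x /[!in_itv] /andP[x0 _]; case: (Dphi x x0).
  - move=> x /[!in_itv] /andP[x0 _].
    rewrite derive1E (@derive_val _ _ _ _ _ _ _ (Dphi x x0)).
    by rewrite pmulr_rle0 ?expR_gt0 //; have := dE_le x x0; lra.
  - apply/continuous_within_itvP => //; split.
    + by move=> x /[!in_itv] /andP[x0 _]; exact: cphi.
    + apply: cvgM => //; apply: cvg_at_right_filter.
      by case: (Dexp 0) => /derivable1_diffP /differentiable_continuous.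
    + exact/cvg_at_left_filter/cphi.
  - by rewrite in_itv /= lexx ltW.
  - by rewrite in_itv /= lexx ltW.
  - exact: ltW.
rewrite /phi mulr0 expR0 mul1r => le_phi.
rewrite -(ler_pM2l (expR_gt0 (mu * t))) mulrA -expRD mulNr subrr expR0 mul1r.
exact: le_phi.
Qed.

End Trajectories.

Section LyapunovFunction.
Variables (R : realType) (m n : nat) (IV : 'M[R]_m) (IQ : 'M[R]_n).
Variables (us : 'cV[R]_m) (ps : 'cV[R]_n).

Lemma is_derive_Ly (uu : R -> 'cV[R]_m) (pp : R -> 'cV[R]_n) (t : R) du dp :
  IV^T = IV -> IQ^T = IQ -> is_derive t 1 uu du -> is_derive t 1 pp dp ->
  is_derive t 1 (fun s => Ly IV IQ us ps (uu s) (pp s))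
    (dot (IV *m (uu t - us)) du + dot (IQ *m (pp t - ps)) dp).
Proof.
have Dhalf k (M : 'M[R]_k) (y : R -> 'cV[R]_k) c dy : M^T = M -> is_derive t 1 y dy ->
    is_derive t 1 (fun s => 2^-1 * sqnorm M (y s - c)) (dot (M *m (y t - c)) dy).
  move=> MT Dy; have Dyc : is_derive t 1 (fun s => y s - c) dy.
    by have := is_deriveB Dy (is_derive_cst c t 1); rewrite subr0.
  have := is_deriveZ 2^-1 (is_derive_sqnorm MT Dyc); move/is_derive_eq; apply.
  by rewrite /GRing.scale /= mulrA mulVf ?pnatr_eq0 // mul1r.
move=> IVT IQT Du Dp; exact: is_deriveD (Dhalf _ _ _ _ _ IVT Du) (Dhalf _ _ _ _ _ IQT Dp).
Qed.

Lemma cvg_Ly T (F : set_system T) (FF : Filter F) (uu : T -> 'cV[R]_m)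
    (pp : T -> 'cV[R]_n) u0 p0 :
  uu s @[s --> F] --> u0 -> pp s @[s --> F] --> p0 ->
  Ly IV IQ us ps (uu s) (pp s) @[s --> F] --> Ly IV IQ us ps u0 p0.
Proof.
move=> cu cp; apply: cvgD; apply: cvgM; try exact: cvg_cst.
  by apply: cvg_sqnorm; apply: cvgB cu (cvg_cst us).
by apply: cvg_sqnorm; apply: cvgB cp (cvg_cst ps).
Qed.

End LyapunovFunction.

Unset Implicit Arguments. Set Strict Implicit.
Theorem theorem5p3 (R : realType) (m n : nat) (B : 'M[R]_(n, m))
  (f : 'cV[R]_m -> R) (gf : 'cV[R]_m -> 'cV[R]_m)
  (h : 'cV[R]_n -> R) (gh : 'cV[R]_n -> 'cV[R]_n)
  (us : 'cV[R]_m) (ps : 'cV[R]_n)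
  (TU IV : 'M[R]_m) (TP IQ : 'M[R]_n)
  (mu_f L_f mu_h L_h mu_fB : R) :
  (n <= m)%N ->
  \rank B = n ->
  C1_grad f gf -> lipschitz_grad gf ->
  C1_grad h gh -> lipschitz_grad gh ->
  (* (us, ps) is a saddle point: dL/du = 0 and dL/dp = 0 *)
  dLu B gf us ps = 0 -> dLp B gh us ps = 0 ->
  spd TU -> spd IV -> spd TP -> spd IQ ->
  S11 h gh TP mu_h L_h -> L_h <= 1 ->
  S11 f gf TU mu_f L_f -> L_f <= 1 ->
  0 < mu_fB -> strongly_convex (fB B TP f) (gfB B TP gf) IV mu_fB ->
  (exists c : R, 0 < c /\ strongly_convex (hB B TU h) (ghB B TU gh) IQ c) /\
  forall mu_hB : R, 0 < mu_hB ->
    strongly_convex (hB B TU h) (ghB B TU gh) IQ mu_hB ->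
    let mu := Num.min mu_fB mu_hB in
    0 < mu /\
    (forall (u : 'cV[R]_m) (p : 'cV[R]_n),
      mu * Ly IV IQ us ps u p
        + mu_f / 2 * sqnorm TU (vvar B TU u p - vvar B TU us ps)
        + mu_h / 2 * sqnorm TP (qvar B TP u p - qvar B TP us ps)
      <= - gradE_dot_G B TU TP gf gh IV IQ us ps u p) /\
    (forall (uu : R -> 'cV[R]_m) (pp : R -> 'cV[R]_n),
      (forall t : R, 0 < t ->
         is_derive t (1 : R) uu (Gu B TP gf gh IV (uu t) (pp t)) /\
         is_derive t (1 : R) pp (Gp B TU gf gh IQ (uu t) (pp t))) ->
      uu x @[x --> 0^'+] --> uu 0 ->
      pp x @[x --> 0^'+] --> pp 0 ->
      forall t : R, 0 < t ->
        Ly IV IQ us ps (uu t) (pp t) <= expR (- mu * t) * Ly IV IQ us ps (uu 0) (pp 0)).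
Proof.
move=> _ rB _ _ _ _ dU dP sTU sIV sTP sIQ Sh Lh Sf Lf fB0 scf.
split; first exact: hB_strongly_convex rB sTU (fun x y => S11_bregman_ge0 x y sTP Sh).
move=> mu_hB hB0 sch mu.
have le_mu_fB : mu <= mu_fB by rewrite ge_min lexx.
have le_mu_hB : mu <= mu_hB by rewrite ge_min lexx orbT.
have dissipation u p := lyapunov_dissipation sTU sIV sTP sIQ dU dP u p
  Sf Lf Sh Lh scf sch le_mu_fB le_mu_hB.
split; first by rewrite lt_min fB0.
split=> // uu pp D cu cp.
apply: (@exp_decay _ mu _ (fun s => gradE_dot_G B TU TP gf gh IV IQ us ps (uu s) (pp s))).
- by move=> s /D[Du Dp]; exact: is_derive_Ly (proj1 sIV) (proj1 sIQ) Du Dp.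
- move=> s _; have := dissipation (uu s) (pp s).
  have [[mu_f0 _] [mu_h0 _]] := (Sf, Sh).
  have := mulr_ge0 (divr_ge0 mu_f0 (ler0n R 2))
    (spd_sqnorm_ge0 sTU (vvar B TU (uu s) (pp s) - vvar B TU us ps)).
  have := mulr_ge0 (divr_ge0 mu_h0 (ler0n R 2))
    (spd_sqnorm_ge0 sTP (qvar B TP (uu s) (pp s) - qvar B TP us ps)).
  rewrite mulNr; lra.
- exact: cvg_Ly.
Qed.
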